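(* Let $(G,\sigma)$ be a signed graph, $\tau:V\to\{\pm1\}$ a switching function, $p>1$, $K\in\mathbb{R}$, $N\in(0,\infty]$ and $x\in V$. Then $(G,\sigma)$ satisfies $CD_p^\sigma(K,N)$ at $x$ if and only if $(G,\sigma^\tau)$ satisfies $CD_p^{\sigma^\tau}(K,N)$ at $x$, where $\sigma^\tau_{uv}=\tau(u)\sigma_{uv}\tau(v)$ for $\{u,v\}\in E$.
   Context: $G=(V,E)$ is a locally finite simple graph with degrees $d_x$; $\sigma:E\to\{\pm1\}$, $\sigma_{xy}=\sigma(\{x,y\})$. For $p>1$: $\Delta_{p}^{\sigma}f(x)=\frac{1}{d_{x}}\sum_{y\sim x}|\sigma_{xy}f(y)-f(x)|^{p-2}(\sigma_{xy}f(y)-f(x))$ (with $|t|^{p-2}t=0$ at $t=0$); $\Gamma_p^\sigma(f,g)(x)=\frac{1}{2d_{x}}\sum_{y\sim x}|\sigma_{xy}f(y)-f(x)|^{p-2}(\sigma_{xy}f(y)-f(x))(\sigma_{xy}g(y)-g(x))$; $\mathscr{L}^\sigma_{p,f}\varphi(x)=\frac{1}{d_{x}}\sum_{y\sim x}|\sigma_{xy}f(y)-f(x)|^{p-2}(\varphi(y)-\varphi(x))$; and $\Gamma_{p,2}^\sigma(f,f)(x)=\frac12\mathscr{L}_{p,f}^\sigma(\Gamma^\sigma_p(f,f))(x)-\Gamma_p^\sigma(f,\Delta_p^\sigma f)(x)$ (defined at any $x$ if $p\ge2$, and at $x$ with $\sigma_{xy}f(y)-f(x)\ne0$ for all $y\sim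 x$ if $1<p<2$). $(G,\sigma)$ satisfies $CD_p^\sigma(K,N)$ at $x$ if $\Gamma_{p,2}^{\sigma}(f,f)(x)\geq\frac{1}{N}(\Delta_{p}^{\sigma}f(x))^{2}+K(\Gamma^{\sigma}_{p}(f,f)(x))^{\frac{2p-2}{p}}$ for every $f:V\to\mathbb{R}$ with $\sigma_{xy}f(y)-f(x)\neq0$ for every neighbor $y\sim x$ ($\frac1N=0$ if $N=\infty$). *)

From HB Require Import structures.
From mathcomp Require Import all_boot all_order all_algebra.
From mathcomp Require Import reals constructive_ereal exp.
Set Implicit Arguments. Unset Strict Implicit. Unset Printing Implicit Defensive.
Import Order.TTheory GRing.Theory Num.Theory.
Local Open Scope ring_scope.

Section SignedGraph.
Variables (R : realType) (V : eqType).

(* A locally finite simple graph on V (possibly infinite): nb x is the finite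
   list of neighbours of x, without repetitions, without loops, symmetric. *)
Definition simple_graph (nb : V -> seq V) : Prop :=
  (forall x, uniq (nb x)) /\ (forall x, x \notin nb x) /\
  (forall x y, y \in nb x -> x \in nb y).

(* sigma : E -> {+1,-1}, represented as a symmetric function on adjacent pairs *)
Definition signature (nb : V -> seq V) (sigma : V -> V -> R) : Prop :=
  forall x y, y \in nb x -> sigma x y = sigma y x /\ (sigma x y = 1 \/ sigma x y = -1).

Definition switching_fun (tau : V -> R) : Prop := forall v, tau v = 1 \/ tau v = -1.

Definition switch (sigma : V -> V -> R) (tau : V -> R) : V -> V -> R :=
  fun u v => tau u * sigma u v * tau v.

Variable nb : V -> seq V.

Definition deg (x : V) : R := (size (nb x))%:R.

Definition sdiff (sigma : V -> V -> R) (f : V -> R) (x y : V) : R :=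
  sigma x y * f y - f x.

(* |t|^{p-2} t, which equals 0 at t = 0 (powR 0 a * 0 = 0) *)
Definition spow (p t : R) : R := powR `|t| (p - 2) * t.

Definition pLap (p : R) (sigma : V -> V -> R) (f : V -> R) (x : V) : R :=
  (deg x)^-1 * \sum_(y <- nb x) spow p (sdiff sigma f x y).

Definition pGamma (p : R) (sigma : V -> V -> R) (f g : V -> R) (x : V) : R :=
  (2 * deg x)^-1 *
    \sum_(y <- nb x) spow p (sdiff sigma f x y) * sdiff sigma g x y.

Definition pLf (p : R) (sigma : V -> V -> R) (f phi : V -> R) (x : V) : R :=
  (deg x)^-1 *
    \sum_(y <- nb x) powR `|sdiff sigma f x y| (p - 2) * (phi y - phi x).

Definition pGamma2 (p : R) (sigma : V -> V -> R) (f : V -> R) (x : V) : R :=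
  2^-1 * pLf p sigma f (pGamma p sigma f f) x - pGamma p sigma f (pLap p sigma f) x.

(* 1/N with the convention 1/oo = 0 (N is assumed in (0, oo]) *)
Definition invN (N : \bar R) : R :=
  match N with EFin r => r^-1 | _ => 0 end.

Definition CDp (p : R) (sigma : V -> V -> R) (K : R) (N : \bar R) (x : V) : Prop :=
  forall f : V -> R, (forall y, y \in nb x -> sdiff sigma f x y != 0) ->
    pGamma2 p sigma f x >=
      invN N * (pLap p sigma f x) ^+ 2
      + K * powR (pGamma p sigma f f x) ((2 * p - 2) / p).

End SignedGraph.

From HB Require Import structures.
From mathcomp Require Import all_boot all_order all_algebra.
From mathcomp Require Import boolp reals constructive_ereal exp.
Import Order.TTheory GRing.Theory Num.Theory.
Local Open Scope ring_scope.

(* Switching by tau turns the signed differences of f into those of tau f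
   multiplied by tau(x):
     tau(x) sigma_xy tau(y) (tau(y) f(y)) - tau(x) f(x) = tau(x) (sigma_xy f(y) - f(x)).
   Hence Delta_p (tau f) = tau Delta_p f, while Gamma_p, L_{p,f} and Gamma_{p,2},
   in which these factors appear squared or in absolute value, are unchanged.
   As f |-> tau f is a bijection and switching by tau is an involution, the two
   curvature-dimension conditions at x are equivalent. *)

Section Switching.
Variables (R : realType) (V : eqType) (nb : V -> seq V) (tau : V -> R).
Hypothesis tau_sign : switching_fun tau.

Lemma switching_mulrr u : tau u * tau u = 1.
Proof. by case: (tau_sign u) => ->; rewrite ?mulrNN mulr1. Qed.

Lemma switching_norm u : `|tau u| = 1.
Proof. by case: (tau_sign u) => ->; rewrite ?normrN normr1. Qed.

Lemma switching_mulKr u t : tau u * (tau u * t) = t.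
Proof. by rewrite mulrA switching_mulrr mul1r. Qed.

Lemma switchK (sigma : V -> V -> R) : switch (switch sigma tau) tau = sigma.
Proof.
apply/funext => u; apply/funext => v.
by rewrite /switch -!mulrA switching_mulrr mulr1 switching_mulKr.
Qed.

Variables (sigma : V -> V -> R) (p : R).

Lemma sdiff_switch f u v :
  sdiff (switch sigma tau) (tau \* f) u v = tau u * sdiff sigma f u v.
Proof.
rewrite /sdiff /switch /= mulrBr -!mulrA.
by rewrite [tau v * (tau v * _)]switching_mulKr.
Qed.

Lemma spow_switching u t : spow p (tau u * t) = tau u * spow p t.
Proof. by rewrite /spow normrM switching_norm mul1r mulrCA. Qed.

Lemma pLap_switch f u :
  pLap nb p (switch sigma tau) (tau \* f) u = tau u * pLap nb p sigma f u.
Proof.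
rewrite /pLap [RHS]mulrCA [in RHS]mulr_sumr; congr (_ * _); apply: eq_bigr => y _.
by rewrite sdiff_switch spow_switching.
Qed.

Lemma pGamma_switch f g u :
  pGamma nb p (switch sigma tau) (tau \* f) (tau \* g) u = pGamma nb p sigma f g u.
Proof.
rewrite /pGamma; congr (_ * _); apply: eq_bigr => y _.
by rewrite !sdiff_switch spow_switching mulrCA -mulrA switching_mulKr.
Qed.

Lemma pLf_switch f phi u :
  pLf nb p (switch sigma tau) (tau \* f) phi u = pLf nb p sigma f phi u.
Proof.
rewrite /pLf; congr (_ * _); apply: eq_bigr => y _.
by rewrite sdiff_switch normrM switching_norm mul1r.
Qed.

Lemma pGamma2_switch f u :
  pGamma2 nb p (switch sigma tau) (tau \* f) u = pGamma2 nb p sigma f u.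
Proof.
have Gamma_ff : pGamma nb p (switch sigma tau) (tau \* f) (tau \* f) =
                pGamma nb p sigma f f.
  by apply/funext => w; rewrite pGamma_switch.
have Lap_f : pLap nb p (switch sigma tau) (tau \* f) =
             tau \* pLap nb p sigma f.
  by apply/funext => w; rewrite pLap_switch.
by rewrite /pGamma2 Gamma_ff pLf_switch Lap_f pGamma_switch.
Qed.

Lemma CDp_switch K N x :
  CDp nb p sigma K N x -> CDp nb p (switch sigma tau) K N x.
Proof.
move=> CD g g_nondeg.
have g_switched : g = tau \* (tau \* g).
  by apply/funext => w; rewrite /= switching_mulKr.
have f_nondeg y : y \in nb x -> sdiff sigma (tau \* g) x y != 0.
  move/g_nondeg; rewrite [in X in X -> _]g_switched sdiff_switch.
  by apply: contra => /eqP ->; rewrite mulr0.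
rewrite g_switched pGamma2_switch pLap_switch pGamma_switch.
rewrite exprMn expr2 switching_mulrr mul1r; exact: CD.
Qed.

End Switching.

Theorem proposition4p8 (R : realType) (V : eqType) (nb : V -> seq V)
  (sigma : V -> V -> R) (tau : V -> R) (p K : R) (N : \bar R) (x : V) :
  simple_graph nb -> signature nb sigma -> switching_fun tau ->
  1 < p -> (0 < N)%E ->
  (CDp nb p sigma K N x <-> CDp nb p (switch sigma tau) K N x).
Proof.
move=> _ _ tau_sign _ _.
have CD_switch := @CDp_switch R V nb tau tau_sign.
split; first exact: CD_switch.
by rewrite -{2}(@switchK R V tau tau_sign sigma); exact: CD_switch.
Qed.
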